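(* Let $G$ be a simple graph with $n$ vertices and $m$ edges, and let $\hat{G}$ be a $1$-regular conflict graph on $E(G)$. If $m<2n$, then there exists a vertex $v$ of $G$ such that $\partial_G v$ is conflict-free, i.e. independent in $\hat{G}$.
   Context: A conflict graph on $E(G)$ is a graph $\hat{G}$ with $V(\hat{G})=E(G)$; two edges are conflicting if they are adjacent in $\hat{G}$, and a set of edges is conflict-free if it is independent in $\hat{G}$. For a vertex $v$, $\partial_G v$ denotes the set of edges of $G$ incident with $v$. *)

From mathcomp Require Import all_boot.
Set Implicit Arguments. Unset Strict Implicit. Unset Printing Implicit Defensive.

Definition simple_graph (T : finType) (adj : rel T) : Prop :=
  irreflexive adj /\ symmetric adj.

Definition edges (T : finType) (adj : rel T) : {set {set T}} :=
  [set A : {set T} | [exists x, exists y, adj x y && (A == [set x; y])]].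

Definition incident (T : finType) (adj : rel T) (v : T) : {set {set T}} :=
  [set A in edges adj | v \in A].

Definition conflict_graph (T : finType) (adj : rel T) (conf : rel {set T}) : Prop :=
  (forall A B, conf A B -> (A \in edges adj) && (B \in edges adj)) /\
  (forall A, ~~ conf A A) /\ (forall A B, conf A B = conf B A).

Definition regular_conflict (T : finType) (adj : rel T) (conf : rel {set T}) (k : nat) : Prop :=
  forall A, A \in edges adj -> #|[set B in edges adj | conf A B]| = k.

Definition conflict_free (T : finType) (conf : rel {set T}) (S : {set {set T}}) : Prop :=
  forall A B, A \in S -> B \in S -> ~~ conf A B.

From mathcomp Require Import all_boot.

Set Implicit Arguments.
Unset Strict Implicit.
Unset Printing Implicit Defensive.

(** 1-regularity makes the conflict relation a perfect matching of E(G): every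
    edge has exactly one conflicting partner.  If every vertex v saw a
    conflicting pair inside its star, the 2|V(G)| edges of these pairs would all
    be distinct: a pair determines its vertex, because two distinct edges share
    at most one vertex, and an edge determines its pair, because its partner is
    unique.  Hence |E(G)| >= 2|V(G)|. *)

Lemma set2_of_card_le2 (T : finType) (A : {set T}) (v w : T) :
  #|A| <= 2 -> v != w -> v \in A -> w \in A -> A = [set v; w].
Proof.
move=> A_le2 vw vA wA; apply/eqP; rewrite eq_sym eqEcard cards2 vw A_le2 andbT.
by apply/subsetP => z /set2P[] ->.
Qed.

Lemma card_edge_le2 (T : finType) (adj : rel T) (A : {set T}) :
  A \in edges adj -> #|A| <= 2.
Proof.
rewrite inE => /existsP[x /existsP[y /andP[_ /eqP->]]].
by rewrite cards2; case: (x != y).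
Qed.

Lemma edges_eq_of_common2 (T : finType) (adj : rel T) (A B : {set T}) (v w : T) :
  A \in edges adj -> B \in edges adj -> v != w ->
  v \in A -> w \in A -> v \in B -> w \in B -> A = B.
Proof.
move=> AE BE vw vA wA vB wB.
by rewrite (set2_of_card_le2 (card_edge_le2 AE) vw vA wA)
           (set2_of_card_le2 (card_edge_le2 BE) vw vB wB).
Qed.

Lemma conflict_freeP (T : finType) (conf : rel {set T}) (S : {set {set T}}) :
  reflect (conflict_free conf S) [forall A in S, forall B in S, ~~ conf A B].
Proof.
apply: (iffP forall_inP) => [S_free A B AS BS | S_free A AS].
  by have /forall_inP := S_free A AS; apply.
by apply/forall_inP => B BS; apply: S_free.
Qed.

Section OneRegularConflict.

Variables (T : finType) (adj : rel T) (conf : rel {set T}).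
Hypothesis conf_edges : forall A B, conf A B -> (A \in edges adj) && (B \in edges adj).
Hypothesis conf_irr : forall A, ~~ conf A A.
Hypothesis conf_sym : forall A B, conf A B = conf B A.
Hypothesis conf_reg1 : regular_conflict adj conf 1.

Lemma conflict_partner_uniq (A B C : {set T}) : conf A B -> conf A C -> B = C.
Proof.
move=> AB AC; have /andP[AE BE] := conf_edges AB; have /andP[_ CE] := conf_edges AC.
have [D partnersA] := cards1P (introT eqP (conf_reg1 AE)).
have : B \in [set D] by rewrite -partnersA inE BE AB.
have : C \in [set D] by rewrite -partnersA inE CE AC.
by rewrite !inE => /eqP-> /eqP->.
Qed.

Definition conflicting_pair_at (v : T) (p : {set T} * {set T}) : Prop :=
  [/\ p.1 \in incident adj v, p.2 \in incident adj v & conf p.1 p.2].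

Lemma edges_ge_conflicting_stars (pair : T -> {set T} * {set T}) :
  (forall v, conflicting_pair_at v (pair v)) -> 2 * #|T| <= #|edges adj|.
Proof.
move=> pairP.
pose f (vb : T * bool) := if vb.2 then (pair vb.1).1 else (pair vb.1).2.
have f_conf v b : conf (f (v, b)) (f (v, ~~ b)).
  by have [_ _] := pairP v; case: b; rewrite /f //= conf_sym.
have f_star v b : f (v, b) \in incident adj v.
  by have [] := pairP v; case: b.
have f_edge v b : f (v, b) \in edges adj by have /setIdP[] := f_star v b.
have f_vertex v b : v \in f (v, b) by have /setIdP[] := f_star v b.
have f_neq v b : f (v, b) != f (v, ~~ b).
  by apply: contraNneq (conf_irr (f (v, b))) => {2}->; apply: f_conf.
have f_inj : injective f.
  move=> [v b] [w c] /= fvw.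
  have partner_eq : f (v, ~~ b) = f (w, ~~ c).
    by apply: (conflict_partner_uniq (f_conf v b)); rewrite fvw f_conf.
  have vw : v = w.
    apply/eqP; apply: contraNT (f_neq v b) => vw.
    apply/eqP; apply: (edges_eq_of_common2 (f_edge _ _) (f_edge _ _) vw) => //.
    - by rewrite fvw f_vertex.
    - by rewrite partner_eq f_vertex.
  subst w; congr (_, _); apply/eqP; apply: contraNT (f_neq v b).
  by move: fvw; clear partner_eq; case: b; case: c => //= ->.
have -> : 2 * #|T| = #|[set f vb | vb in [set: T * bool]]|.
  by rewrite card_imset // cardsT card_prod card_bool mulnC.
by apply/subset_leq_card/subsetP => _ /imsetP[[v b] _ ->]; apply: f_edge.
Qed.

Lemma exists_conflict_free_star :
  #|edges adj| < 2 * #|T| -> exists v, conflict_free conf (incident adj v).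
Proof.
move=> few_edges.
have [/existsP[v /conflict_freeP]|] := boolP [exists v,
    [forall A in incident adj v, forall B in incident adj v, ~~ conf A B]].
  by exists v.
rewrite negb_exists => /forallP no_free; exfalso.
have conflicting_pair v : exists p, conflicting_pair_at v p.
  have /forall_inPn[A Av /forall_inPn[B Bv]] := no_free v.
  by rewrite negbK => AB; exists (A, B).
have [pair pairP] := fin_all_exists conflicting_pair.
by move: few_edges; rewrite ltnNge (edges_ge_conflicting_stars pairP).
Qed.

End OneRegularConflict.

Theorem proposition9 (T : finType) (adj : rel T) (conf : rel {set T}) :
  simple_graph adj ->
  conflict_graph adj conf ->
  regular_conflict adj conf 1 ->
  #|edges adj| < 2 * #|T| ->
  exists v : T, conflict_free conf (incident adj v).
Proof.
move=> _ [conf_edges [conf_irr conf_sym]] conf_reg1.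
exact: (exists_conflict_free_star conf_edges conf_irr conf_sym conf_reg1).
Qed.
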